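(* Let $q\ge5$ be odd. The $\mathrm{U}\Gamma$-lines (non-tangent unisecants of the twisted cubic $\mathcal{C}$ lying in an osculating plane) form one orbit under $G_q$. The subgroup of $G_q$ fixing a $\mathrm{U}\Gamma$-line has size $q-1$. For the $\mathrm{U}\Gamma$-line $\ell$ through $P_0=P(0,0,0,1)$ and $P(0,1,0,0)$, every element of the subgroup of $G_q$ fixing $\ell$ has a matrix of the form $\begin{pmatrix}1&0&0&0\\0&d&0&0\\0&0&d^2&0\\0&0&0&d^3\end{pmatrix}$, $d\in\mathbb{F}_q^*$.
   Context: $\mathrm{PG}(3,q)$ has points $P(x_0,x_1,x_2,x_3)$; $\boldsymbol{\pi}(c_0,c_1,c_2,c_3)$ is the plane $c_0x_0+c_1x_1+c_2x_2+c_3x_3=0$. For $t\in\mathbb{F}_q$ let $P_t=P(t^3,t^2,t,1)$, $P_\infty=P(1,0,0,0)$; the twisted cubic is $\mathcal{C}=\{P_t\}$. The osculating planes are $\pi_{\mathrm{osc}}(t)=\boldsymbol{\pi}(1,-3t,3t^2,-t^3)$ ($t\in\mathbb{F}_q$), $\pi_{\mathrm{osc}}(\infty)=\boldsymbol{\pi}(0,0,0,1)$. The tangent at $P_t$ ($t\in\mathbb{F}_q$) is the line through $P_t$ and $P(3t^2,2t,1,0)$; the tangent at $P_\infty$ is $x_2=x_3=0$. A $\mathrm{U}\Gamma$-line is a line meeting $\mathcal{C}$ in exactly one point, not a tangent, contained in an osculating plane. $G_q$ is the group of projectivities mapping $\mathcal{C}$ to itself; for $q\ge5$ its elements are $x\mapsto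 xM$ on row vectors, $M=\begin{pmatrix} a^3&a^2c&ac^2&c^3\\ 3a^2b&a^2d+2abc&bc^2+2acd&3c^2d\\ 3ab^2&b^2c+2abd&ad^2+2bcd&3cd^2\\ b^3&b^2d&bd^2&d^3\end{pmatrix}$, $ad-bc\ne0$, up to scalar. *)

(* PG(3,q) over a finite field F with q = #|F|. *)
From HB Require Import structures.
From mathcomp Require Import all_boot all_order all_algebra all_fingroup all_field.
Set Implicit Arguments. Unset Strict Implicit. Unset Printing Implicit Defensive.
Import Order.TTheory GRing.Theory.
Local Open Scope ring_scope.

Section TwistedCubic.
Variable F : finFieldType.

(* row vector (x0,x1,x2,x3); points are nonzero row vectors up to scalar *)
Definition vec4 (x0 x1 x2 x3 : F) : 'rV[F]_4 :=
  \row_(j < 4) nth 0 [:: x0; x1; x2; x3] j.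

(* points of the twisted cubic: Some t = P_t, None = P_infinity *)
Definition cpt (t : option F) : 'rV[F]_4 :=
  match t with Some t => vec4 (t ^+ 3) (t ^+ 2) t 1 | None => vec4 1 0 0 0 end.

(* coefficient vectors of the osculating planes *)
Definition osc (t : option F) : 'rV[F]_4 :=
  match t with
  | Some t => vec4 1 (- (3%:R * t)) (3%:R * t ^+ 2) (- t ^+ 3)
  | None => vec4 0 0 0 1
  end.

(* lines are 2x4 matrices of rank 2 (their row space); equality of lines is
   equality of row spaces (_ == _)%MS *)
Definition line2 (u v : 'rV[F]_4) : 'M[F]_(2, 4) := col_mx u v.

Definition tangent (t : option F) : 'M[F]_(2, 4) :=
  match t with
  | Some t => line2 (cpt (Some t)) (vec4 (3%:R * t ^+ 2) (2%:R * t) 1 0)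
  | None => line2 (vec4 1 0 0 0) (vec4 0 1 0 0)
  end.

Definition is_line (L : 'M[F]_(2, 4)) : bool := \rank L == 2%N.

Definition in_plane (L : 'M[F]_(2, 4)) (c : 'rV[F]_4) : bool := L *m c^T == 0.

Definition UGamma (L : 'M[F]_(2, 4)) : bool :=
  [&& is_line L,
      #|[set t : option F | (cpt t <= L)%MS]| == 1%N,
      [forall t : option F, ~~ (L == tangent t)%MS] &
      [exists t : option F, in_plane L (osc t)]].

(* the matrix M(a,b,c,d) of the context; acts by x |-> x M *)
Definition Mcub (a b c d : F) : 'M[F]_4 :=
  \matrix_(i < 4, j < 4) nth 0 (nth [::]
    [:: [:: a ^+ 3; a ^+ 2 * c; a * c ^+ 2; c ^+ 3];
        [:: 3%:R * a ^+ 2 * b; a ^+ 2 * d + 2%:R * a * b * c;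
            b * c ^+ 2 + 2%:R * a * c * d; 3%:R * c ^+ 2 * d];
        [:: 3%:R * a * b ^+ 2; b ^+ 2 * c + 2%:R * a * b * d;
            a * d ^+ 2 + 2%:R * b * c * d; 3%:R * c * d ^+ 2];
        [:: b ^+ 3; b ^+ 2 * d; b * d ^+ 2; d ^+ 3]] i) j.

(* a projectivity = the class of a matrix up to nonzero scalar *)
Definition pclass (M : 'M[F]_4) : {set 'M[F]_4} :=
  [set mu *: M | mu in [set mu : F | mu != 0]].

(* the group G_q of projectivities preserving the twisted cubic (q >= 5) *)
Definition Gq : {set {set 'M[F]_4}} :=
  [set pclass (Mcub x.1.1.1 x.1.1.2 x.1.2 x.2) |
     x in [set x : F * F * F * F | x.1.1.1 * x.2 - x.1.1.2 * x.1.2 != 0]].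

Definition maps_line (g : {set 'M[F]_4}) (L1 L2 : 'M[F]_(2, 4)) : bool :=
  [exists M in g, (L1 *m M == L2)%MS].

Definition stab (L : 'M[F]_(2, 4)) : {set {set 'M[F]_4}} :=
  [set g in Gq | maps_line g L L].

Definition ell0 : 'M[F]_(2, 4) := line2 (vec4 0 0 0 1) (vec4 0 1 0 0).

Definition diag4 (d : F) : 'M[F]_4 :=
  \matrix_(i < 4, j < 4) (if i == j then d ^+ i else 0).

End TwistedCubic.

From HB Require Import structures.
From mathcomp Require Import all_boot all_order all_algebra all_fingroup all_field.
From mathcomp Require Import cyclic ring.
Import Order.TTheory GRing.Theory.
Local Open Scope ring_scope.

(* G_q is the image of GL_2(F) acting on binary cubic forms, so it preserves
   the twisted cubic together with its tangents and osculating planes.  A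
   UGamma-line meets C in the point P_t of the osculating plane containing it;
   an element of G_q moves P_t to P_0, and the line becomes a non-tangent line
   through P_0 in the plane x_0 = 0.  When 2 is invertible the maps
   [[1, c], [0, 1]], which fix P_0, move [ell0] onto every such line.  Hence
   all UGamma-lines are images of [ell0], their stabilisers are conjugate, and
   a direct computation shows that the stabiliser of [ell0] is the torus
   {diag(1, d, d^2, d^3)}, of order q - 1. *)

Set Implicit Arguments. Unset Strict Implicit. Unset Printing Implicit Defensive.

Section TwistedCubicLines.
Variable F : finFieldType.
Implicit Types (a b c d k x y : F) (u v w : 'rV[F]_4) (M N : 'M[F]_4).

Local Notation i4 k := (@Ordinal 4 k isT).

Lemma odd_card_two_neq0 : odd #|F| -> 2%:R != 0 :> F.
Proof.
apply: contraL => /eqP two_eq0.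
have char2 : 2%N \in [pchar F] by rewrite inE two_eq0 eqxx.
have := order_dvdG (in_setT (1 : pPrimeCharType char2)).
by rewrite order_pprimeChar ?oner_neq0 // cardsT dvdn2.
Qed.

Lemma vec4_eta u : u = vec4 (u 0 (i4 0)) (u 0 (i4 1)) (u 0 (i4 2)) (u 0 (i4 3)).
Proof.
apply/rowP => j; rewrite !mxE.
by case: j => [[|[|[|[|j]]]] lt_j4] //=; congr (u _ _); apply: val_inj.
Qed.

Lemma vec4_lin a b x0 x1 x2 x3 y0 y1 y2 y3 :
  a *: vec4 x0 x1 x2 x3 + b *: vec4 y0 y1 y2 y3 =
  vec4 (a * x0 + b * y0) (a * x1 + b * y1) (a * x2 + b * y2) (a * x3 + b * y3).
Proof. by apply/rowP => j; rewrite !mxE; case: j => [[|[|[|[|j]]]] lt_j4]. Qed.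

Lemma vec4_dot x0 x1 x2 x3 y0 y1 y2 y3 :
  vec4 x0 x1 x2 x3 *m (vec4 y0 y1 y2 y3)^T = (x0 * y0 + x1 * y1 + x2 * y2 + x3 * y3)%:M.
Proof.
by rewrite [LHS]mx11_scalar !mxE !big_ord_recr big_ord0 /= !mxE /= add0r.
Qed.

Lemma vec4_dot_eq0 x0 x1 x2 x3 y0 y1 y2 y3 :
  (vec4 x0 x1 x2 x3 *m (vec4 y0 y1 y2 y3)^T == 0) =
  (x0 * y0 + x1 * y1 + x2 * y2 + x3 * y3 == 0).
Proof. by rewrite vec4_dot -scalemx1 scaler_eq0 oner_eq0 orbF. Qed.

Lemma vec4_mulMcub a b c d x0 x1 x2 x3 :
  vec4 x0 x1 x2 x3 *m Mcub a b c d =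
  vec4 (x0 * a ^+ 3 + x1 * (3%:R * a ^+ 2 * b) + x2 * (3%:R * a * b ^+ 2) + x3 * b ^+ 3)
       (x0 * (a ^+ 2 * c) + x1 * (a ^+ 2 * d + 2%:R * a * b * c)
          + x2 * (b ^+ 2 * c + 2%:R * a * b * d) + x3 * (b ^+ 2 * d))
       (x0 * (a * c ^+ 2) + x1 * (b * c ^+ 2 + 2%:R * a * c * d)
          + x2 * (a * d ^+ 2 + 2%:R * b * c * d) + x3 * (b * d ^+ 2))
       (x0 * c ^+ 3 + x1 * (3%:R * c ^+ 2 * d) + x2 * (3%:R * c * d ^+ 2) + x3 * d ^+ 3).
Proof.
apply/rowP => j; rewrite !mxE !big_ord_recr big_ord0 /= !mxE /=.
by case: j => [[|[|[|[|j]]]] lt_j4] //=; ring.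
Qed.

Lemma sub_line2P w u v :
  reflect (exists a b, w = a *: u + b *: v) (w <= line2 u v)%MS.
Proof.
rewrite /line2; apply: (iffP submxP) => [[D ->] | [a [b ->]]].
  rewrite -[D](@hsubmxK _ 1 1 1) (@mul_row_col _ 1 1 1 4).
  set Dl := lsubmx _; set Dr := rsubmx _.
  by rewrite [Dl]mx11_scalar [Dr]mx11_scalar !mul_scalar_mx; do 2 eexists.
exists (row_mx a%:M b%:M : 'M_(1, 1 + 1)).
by rewrite (@mul_row_col _ 1 1 1 4) !mul_scalar_mx.
Qed.

Lemma line2_sub m u v (C : 'M[F]_(m, 4)) :
  (line2 u v <= C)%MS = (u <= C)%MS && (v <= C)%MS.
Proof. exact: (@col_mx_sub _ 1 1). Qed.

Lemma in_plane_line2 u v p :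
  in_plane (line2 u v) p = (u *m p^T == 0) && (v *m p^T == 0).
Proof. by rewrite /in_plane /line2 (@mul_col_mx _ 1 1) (@col_mx_eq0 _ 1 1). Qed.

Lemma in_plane_sub L p w : in_plane L p -> (w <= L)%MS -> w *m p^T = 0.
Proof. by move=> /eqP Lp /submxP [D ->]; rewrite -mulmxA Lp mulmx0. Qed.

Lemma eqmx_row_free m n (A B : 'M[F]_(m, n)) :
  (A <= B)%MS -> row_free A -> (A == B)%MS.
Proof.
move=> sAB /eqP rA; have [_ <-] := mxrank_leqif_eq sAB.
by rewrite eqn_leq mxrankS // rA rank_leq_row.
Qed.

(* [Mcub] is the action of [GL_2(F)] on binary cubic forms: this product rule
   is the matrix multiplication of [[a, c], [b, d]]. *)
Lemma mulMcub a b c d a' b' c' d' :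
  Mcub a b c d *m Mcub a' b' c' d' =
  Mcub (a * a' + c * b') (b * a' + d * b') (a * c' + c * d') (b * c' + d * d').
Proof.
apply/matrixP => i j; rewrite !mxE !big_ord_recr big_ord0 /= !mxE /=.
by case: i => [[|[|[|[|i]]]] ?] //=; case: j => [[|[|[|[|j]]]] ?] //=; ring.
Qed.

Lemma McubZ k a b c d :
  Mcub (k * a) (k * b) (k * c) (k * d) = k ^+ 3 *: Mcub a b c d.
Proof.
apply/matrixP => i j; rewrite !mxE /=.
by case: i => [[|[|[|[|i]]]] ?] //=; case: j => [[|[|[|[|j]]]] ?] //=; ring.
Qed.

Lemma Mcub1 : Mcub 1 0 0 1 = 1%:M :> 'M[F]_4.
Proof.
apply/matrixP => i j; rewrite !mxE /=.
by case: i => [[|[|[|[|i]]]] ?] //=; case: j => [[|[|[|[|j]]]] ?] //=; ring.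
Qed.

Lemma diag4E d : diag4 d = Mcub 1 0 0 d.
Proof.
apply/matrixP => i j; rewrite !mxE /=.
by case: i => [[|[|[|[|i]]]] ?] //=; case: j => [[|[|[|[|j]]]] ?] //=; ring.
Qed.

Definition cubic_mx : {set 'M[F]_4} :=
  [set Mcub x.1.1.1 x.1.1.2 x.1.2 x.2 |
     x in [set x : F * F * F * F | x.1.1.1 * x.2 - x.1.1.2 * x.1.2 != 0]].

Lemma cubic_mxP M :
  reflect (exists a b c d, a * d - b * c != 0 /\ M = Mcub a b c d) (M \in cubic_mx).
Proof.
apply: (iffP imsetP) => [[[[[a b] c] d]] | [a [b [c [d [detM ->]]]]]].
  by rewrite inE /= => detM ->; exists a, b, c, d.
by exists (a, b, c, d); rewrite ?inE.
Qed.

Lemma Mcub_cubic a b c d : a * d - b * c != 0 -> Mcub a b c d \in cubic_mx.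
Proof. by move=> detM; apply/cubic_mxP; exists a, b, c, d. Qed.

Lemma cubic_mxM M N : M \in cubic_mx -> N \in cubic_mx -> M *m N \in cubic_mx.
Proof.
move=> /cubic_mxP [a [b [c [d [detM ->]]]]] /cubic_mxP [a' [b' [c' [d' [detN ->]]]]].
rewrite mulMcub; apply: Mcub_cubic.
suff -> : (a * a' + c * b') * (b * c' + d * d') - (b * a' + d * b') * (a * c' + c * d')
          = (a * d - b * c) * (a' * d' - b' * c') by rewrite mulf_neq0.
by ring.
Qed.

Lemma cubic_mx_inv M :
  M \in cubic_mx -> exists2 N, N \in cubic_mx & M *m N = 1%:M.
Proof.
move=> /cubic_mxP [a [b [c [d [detM ->]]]]]; set e := a * d - b * c.
exists (Mcub (d / e) (- b / e) (- c / e) (a / e)).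
  apply: Mcub_cubic; suff -> : d / e * (a / e) - - b / e * (- c / e) = e^-1.
    by rewrite invr_eq0.
  by rewrite /e; field.
by rewrite mulMcub -Mcub1; congr Mcub; rewrite /e; field.
Qed.

Lemma cubic_mx_unit M : M \in cubic_mx -> M \in unitmx.
Proof. by case/cubic_mx_inv => N _ /mulmx1_unit []. Qed.

Lemma cubic_mxV M : M \in cubic_mx -> invmx M \in cubic_mx.
Proof.
move=> cM; have [N cN MN1] := cubic_mx_inv cM.
suff -> : invmx M = N by [].
by rewrite -[N](mulKmx (cubic_mx_unit cM)) MN1 mulmx1.
Qed.

Lemma row_free_mul_cubic m (A : 'M[F]_(m, 4)) M :
  M \in cubic_mx -> row_free (A *m M) = row_free A.
Proof. by move=> cM; rewrite /row_free mxrankMfree // row_free_unit cubic_mx_unit. Qed.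

Lemma eqmx_mul_cubic m1 m2 (A : 'M[F]_(m1, 4)) (B : 'M[F]_(m2, 4)) M :
  M \in cubic_mx -> (A *m M == B *m M)%MS = (A == B)%MS.
Proof. by move=> cM; rewrite !submxMfree // row_free_unit cubic_mx_unit. Qed.

Lemma pclassP X M : reflect (exists2 mu, mu != 0 & X = mu *: M) (X \in pclass M).
Proof.
apply: (iffP imsetP) => [[mu] | [mu mu_neq0 ->]]; first by rewrite inE; exists mu.
by exists mu; rewrite ?inE.
Qed.

Lemma pclass_id M : M \in pclass M.
Proof. by apply/pclassP; exists 1; rewrite ?oner_neq0 ?scale1r. Qed.

Lemma pclassZ k M : k != 0 -> pclass (k *: M) = pclass M.
Proof.
move=> k_neq0; apply/setP => X; apply/pclassP/pclassP => -[mu mu_neq0 ->].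
  by exists (mu * k); rewrite ?mulf_neq0 ?scalerA.
by exists (mu / k); rewrite ?mulf_neq0 ?invr_neq0 // scalerA mulfVK.
Qed.

Lemma pclass_conj N N' M :
  [set N *m X *m N' | X in pclass M] = pclass (N *m M *m N').
Proof.
rewrite /pclass -imset_comp; apply: eq_imset => mu /=.
by rewrite -scalemxAr -scalemxAl.
Qed.

Lemma maps_line_pclass N L1 L2 :
  maps_line (pclass N) L1 L2 = (L1 *m N == L2)%MS.
Proof.
apply/existsP/idP => [[X /andP [/pclassP [mu mu_neq0 ->]]] | L1N]; last first.
  by exists N; rewrite pclass_id.
by rewrite -scalemxAr; move/eqmxP/(eqmx_trans (eqmx_sym (eqmx_scale _ mu_neq0)))/eqmxP.
Qed.

Lemma GqE : Gq F = [set pclass M | M in cubic_mx].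
Proof. by rewrite /Gq /cubic_mx -imset_comp. Qed.

Lemma cpt_in_osc (s t : option F) : cpt s *m (osc t)^T = 0 -> s = t.
Proof.
case: s => [s|]; case: t => [t|] //= /eqP; rewrite vec4_dot_eq0.
- suff -> : s ^+ 3 * 1 + s ^+ 2 * - (3%:R * t) + s * (3%:R * t ^+ 2) + 1 * - t ^+ 3
            = (s - t) ^+ 3 by rewrite expf_eq0 subr_eq0 => /eqP ->.
  by ring.
- suff -> : s ^+ 3 * 0 + s ^+ 2 * 0 + s * 0 + 1 * 1 = 1 by rewrite oner_eq0.
  by ring.
- suff -> : 1 * 1 + 0 * - (3%:R * t) + 0 * (3%:R * t ^+ 2) + 0 * - t ^+ 3 = 1
    by rewrite oner_eq0.
  by ring.
Qed.

Lemma cubic_frame (t : option F) : exists2 M, M \in cubic_mx &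
  [/\ cpt t *m M = vec4 0 0 0 1, M *m (vec4 1 0 0 0)^T = (osc t)^T
    & tangent t *m M = tangent (Some 0)].
Proof.
case: t => [t|]; [exists (Mcub 1 (- t) 0 1) | exists (Mcub 0 1 1 0)];
  try by apply: Mcub_cubic;
    rewrite !(mul0r, mulr0, mul1r, subr0, sub0r) ?oppr_eq0 oner_neq0.
all: split; first by rewrite /= vec4_mulMcub; congr vec4; ring.
all: try by apply/matrixP => i j; rewrite !ord1 !mxE !big_ord_recr big_ord0 /= !mxE /=;
  case: i => [[|[|[|[|i]]]] ?] //=; ring.
all: rewrite /tangent /line2 !(@mul_col_mx _ 1 1) !vec4_mulMcub.
all: by apply: f_equal2; congr vec4; ring.
Qed.

Lemma row_free_ell0 : row_free (ell0 F).
Proof.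
apply/eqP/anti_leq; rewrite rank_leq_row /=.
apply: (@mulmx1_min_rank F 2 2 4 (ell0 F) 1%:M (ell0 F)^T).
rewrite mul1mx /ell0 /line2 (@tr_col_mx _ 1 1).
rewrite (@mul_col_row _ 1 1 4 1 1) !vec4_dot !(mulr0, mul0r, mulr1, addr0, add0r).
by rewrite (scalar_mx_block 1 1 1) raddf0.
Qed.

Lemma tangent0E :
  tangent (Some 0) = line2 (vec4 0 0 0 1) (vec4 0 0 1 0) :> 'M[F]_(2, 4).
Proof. by rewrite /tangent /=; apply: f_equal2; congr vec4; ring. Qed.

Lemma shear_cubic c : Mcub 1 0 c 1 \in cubic_mx.
Proof. by rewrite Mcub_cubic // mulr1 mul0r subr0 oner_neq0. Qed.

Lemma ell0_Mcub a b c d :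
  ell0 F *m Mcub a b c d =
  line2 (vec4 (b ^+ 3) (b ^+ 2 * d) (b * d ^+ 2) (d ^+ 3))
        (vec4 (3%:R * a ^+ 2 * b) (a ^+ 2 * d + 2%:R * a * b * c)
              (b * c ^+ 2 + 2%:R * a * c * d) (3%:R * c ^+ 2 * d)).
Proof.
rewrite /ell0 /line2 (@mul_col_mx _ 1 1) !vec4_mulMcub.
by apply: f_equal2; congr vec4; ring.
Qed.

Lemma ell0_shear c :
  ell0 F *m Mcub 1 0 c 1 = line2 (vec4 0 0 0 1) (vec4 0 1 (2%:R * c) (3%:R * c ^+ 2)).
Proof. by rewrite ell0_Mcub; apply: f_equal2; congr vec4; ring. Qed.

Lemma sub_ell0_coords w : (w <= ell0 F)%MS -> w 0 (i4 0) = 0 /\ w 0 (i4 2) = 0.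
Proof. by case/sub_line2P => a [b ->]; rewrite !mxE /=; split; ring. Qed.

Lemma cpt_sub_ell0 (t : option F) : (cpt t <= ell0 F)%MS = (t == Some 0).
Proof.
apply/idP/eqP => [/sub_ell0_coords [] | ->]; last first.
  by apply/sub_line2P; exists 1, 0; rewrite vec4_lin; congr vec4; ring.
by case: t => [t|] /=; rewrite !mxE /=; [move=> _ -> | move=> /eqP; rewrite oner_eq0].
Qed.

Lemma UGamma_ell0 : UGamma (ell0 F).
Proof.
apply/and4P; split; first exact: row_free_ell0.
- apply/cards1P; exists (Some 0); apply/setP => t; by rewrite !inE cpt_sub_ell0.
- apply/forallP => t; apply/negP => /andP [_].
  case: t => [t|]; rewrite /tangent line2_sub => /andP [].
    by move=> _ /sub_ell0_coords []; rewrite !mxE /= => _ /eqP; rewrite oner_eq0.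
  by move=> /sub_ell0_coords []; rewrite !mxE /= => /eqP; rewrite oner_eq0.
- apply/existsP; exists (Some 0); rewrite /ell0 in_plane_line2 !vec4_dot_eq0.
  by apply/andP; split; apply/eqP; ring.
Qed.

Lemma leq_card_stab M L1 L2 :
  M \in cubic_mx -> (L1 *m M == L2)%MS -> (#|stab L1| <= #|stab L2|)%N.
Proof.
move=> cM /eqmxP L1M; have uM := cubic_mx_unit cM.
pose conj X := invmx M *m X *m M.
have conj_inj : injective conj.
  move=> X Y /(congr1 (fun Z => M *m Z *m invmx M)).
  by rewrite /conj !mulmxA mulmxV // !mul1mx !mulmxK.
rewrite -(card_imset _ (imset_inj conj_inj)); apply/subset_leq_card/subsetP.
move=> _ /imsetP [g /setIdP [+ fixN] ->]; rewrite GqE => /imsetP [N cN gN].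
rewrite {g}gN in fixN *.
rewrite pclass_conj inE GqE imset_f ?cubic_mxM ?cubic_mxV //= maps_line_pclass.
rewrite maps_line_pclass in fixN; apply/eqmxP; rewrite !mulmxA.
apply: eqmx_trans (eqmxMr _ (eqmxMr _ (eqmxMr _ (eqmx_sym L1M)))) _.
by rewrite mulmxK //; apply: eqmx_trans (eqmxMr _ (eqmxP fixN)) L1M.
Qed.

Lemma card_stab_cubic M L1 L2 :
  M \in cubic_mx -> (L1 *m M == L2)%MS -> #|stab L1| = #|stab L2|.
Proof.
move=> cM L1M; apply/eqP; rewrite eqn_leq (leq_card_stab cM L1M).
apply: (leq_card_stab (cubic_mxV cM)).
rewrite -[L1](mulmxK (cubic_mx_unit cM)) eqmx_mul_cubic ?cubic_mxV //.
by apply/eqmxP/eqmx_sym/eqmxP.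
Qed.

Lemma Mcub_diag4 a d : a != 0 -> Mcub a 0 0 d = a ^+ 3 *: diag4 (d / a).
Proof. by move=> a_neq0; rewrite diag4E -McubZ mulr1 mulr0 mulrC divfK. Qed.

Lemma ell0_diag4 d : d != 0 -> (ell0 F *m diag4 d == ell0 F)%MS.
Proof.
move=> d_neq0; apply/eqmxP/eqmx_sym/eqmxP; apply: eqmx_row_free row_free_ell0.
rewrite diag4E ell0_Mcub {1}/ell0 line2_sub; apply/andP; split; apply/sub_line2P.
  by exists (d ^- 3), 0; rewrite vec4_lin; congr vec4; field.
by exists 0, d^-1; rewrite vec4_lin; congr vec4; field.
Qed.

Hypothesis two_neq0 : 2%:R != 0 :> F.

Lemma osc0_line_shear_ell0 L :
  is_line L -> (vec4 0 0 0 1 <= L)%MS -> in_plane L (vec4 1 0 0 0) ->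
  ~~ (L == tangent (Some 0))%MS -> exists c, (ell0 F *m Mcub 1 0 c 1 == L)%MS.
Proof.
move=> lineL P0L planeL not_tanL.
have [i not_tan_i] : exists i, ~~ (row i L <= tangent (Some 0))%MS.
  apply/existsP; rewrite -negb_forall; apply: contra not_tanL => /forallP sub_tan.
  by apply: eqmx_row_free lineL; apply/row_subP => i; apply: sub_tan.
move: (row_sub i L) not_tan_i (in_plane_sub planeL (row_sub i L)).
rewrite [row i L]vec4_eta; set w0 := row i L 0 _; set w1 := row i L 0 _.
set w2 := row i L 0 _; set w3 := row i L 0 _ => Lw not_tan_w /eqP.
rewrite vec4_dot_eq0 !(mulr0, mulr1, addr0) => /eqP w0_eq0.
have w1_neq0 : w1 != 0.
  apply: contra not_tan_w => /eqP w1_eq0; rewrite tangent0E.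
  by apply/sub_line2P; exists w3, w2; rewrite vec4_lin w0_eq0 w1_eq0; congr vec4; ring.
pose c := w2 / (2%:R * w1); exists c; apply: eqmx_row_free; last first.
  by rewrite row_free_mul_cubic ?row_free_ell0 ?shear_cubic.
rewrite ell0_shear line2_sub P0L /=.
suff -> : vec4 0 1 (2%:R * c) (3%:R * c ^+ 2) =
          w1^-1 *: vec4 w0 w1 w2 w3 + (3%:R * c ^+ 2 - w3 / w1) *: vec4 0 0 0 1.
  by rewrite addmx_sub ?scalemx_sub.
by rewrite vec4_lin w0_eq0 /c; congr vec4; field; rewrite ?w1_neq0 ?two_neq0.
Qed.

Lemma UGamma_ell0_image L :
  UGamma L -> exists2 M, M \in cubic_mx & (ell0 F *m M == L)%MS.
Proof.
case/and4P => lineL /cards1P [s Ls] /forallP not_tan /existsP [t planeL].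
have sL : (cpt s <= L)%MS by have := set11 s; rewrite -Ls inE.
have st := cpt_in_osc (in_plane_sub planeL sL); subst t.
have [N cN [cptN oscN tanN]] := cubic_frame s.
have [c shear] : exists c, (ell0 F *m Mcub 1 0 c 1 == L *m N)%MS.
  apply: osc0_line_shear_ell0 => //.
  - by rewrite /is_line -/(row_free _) row_free_mul_cubic.
  - by rewrite -cptN submxMr.
  - by rewrite /in_plane -mulmxA oscN.
  - by rewrite -tanN eqmx_mul_cubic.
exists (Mcub 1 0 c 1 *m invmx N); first by rewrite cubic_mxM ?cubic_mxV ?shear_cubic.
by rewrite mulmxA -[L](mulmxK (cubic_mx_unit cN)) eqmx_mul_cubic ?cubic_mxV.
Qed.

Lemma stab_ell0_Mcub a b c d :
  a * d - b * c != 0 -> (ell0 F *m Mcub a b c d <= ell0 F)%MS -> b = 0 /\ c = 0.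
Proof.
rewrite ell0_Mcub line2_sub => detM.
case/andP => [/sub_ell0_coords [e0 _] /sub_ell0_coords [_ e2]].
move: e0 e2; rewrite !mxE /= => /eqP; rewrite expf_eq0 /= => /eqP b_eq0.
subst b; move: detM; rewrite mul0r subr0 mulf_eq0 negb_or => /andP [a_neq0 d_neq0].
rewrite mul0r add0r => /eqP; rewrite !mulf_eq0 (negbTE two_neq0) (negbTE a_neq0).
by rewrite (negbTE d_neq0) orbF => /eqP.
Qed.

Lemma stab_ell0E :
  stab (ell0 F) = [set pclass (diag4 d) | d in [set d : F | d != 0]].
Proof.
apply/setP => g; apply/setIdP/imsetP => [[] | [d]]; rewrite GqE.
  case/imsetP => _ /cubic_mxP [a [b [c [d [detM ->]]]]] ->.
  rewrite maps_line_pclass => /andP [sub_ell0M _].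
  have [b_eq0 c_eq0] := stab_ell0_Mcub detM sub_ell0M; subst b c.
  move: detM; rewrite mul0r subr0 mulf_eq0 negb_or => /andP [a_neq0 d_neq0].
  exists (d / a); first by rewrite inE mulf_neq0 ?invr_neq0.
  by rewrite Mcub_diag4 // pclassZ // expf_neq0.
rewrite inE => d_neq0 ->; rewrite maps_line_pclass ell0_diag4 // imset_f //.
by rewrite diag4E Mcub_cubic // mul1r mul0r subr0.
Qed.

Lemma card_stab_ell0 : #|stab (ell0 F)| = #|F|.-1.
Proof.
rewrite stab_ell0E card_in_imset => [|r s _ _ rs].
  by rewrite -(cardsC1 0); apply: eq_card => d; rewrite !inE.
have /pclassP [mu _ /matrixP rs_mu] : diag4 r \in pclass (diag4 s).
  by rewrite -rs pclass_id.
move: (rs_mu (i4 0) (i4 0)) (rs_mu (i4 1) (i4 1)); rewrite !mxE /= !expr0 !expr1.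
by rewrite mulr1 => <-; rewrite mul1r.
Qed.

End TwistedCubicLines.

Theorem theorem6p2 (F : finFieldType) :
  odd #|F| -> (5 <= #|F|)%N ->
  [/\ (forall L1 L2 : 'M[F]_(2, 4), UGamma L1 -> UGamma L2 ->
         exists2 g, g \in Gq F & maps_line g L1 L2),
      (forall L : 'M[F]_(2, 4), UGamma L -> #|stab L| = (#|F|).-1),
      UGamma (ell0 F) &
      (forall g, g \in stab (ell0 F) ->
         exists2 d : F, d != 0 & diag4 d \in g)].
Proof.
(* The bound q >= 5 only matters for the description of G_q as [Gq]. *)
move=> /odd_card_two_neq0 two_neq0 _; have image_ell0 := UGamma_ell0_image two_neq0.
split.
- move=> L1 L2 /image_ell0 [M1 cM1 /eqmxP ell0_L1] /image_ell0 [M2 cM2 ell0_L2].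
  exists (pclass (invmx M1 *m M2)); first by rewrite GqE imset_f ?cubic_mxM ?cubic_mxV.
  rewrite maps_line_pclass; apply/eqmxP.
  apply: eqmx_trans (eqmxMr _ (eqmx_sym ell0_L1)) _.
  by rewrite mulmxA mulmxK ?cubic_mx_unit //; apply/eqmxP.
- move=> L /image_ell0 [M cM ell0_L].
  by rewrite -(card_stab_cubic cM ell0_L) (card_stab_ell0 two_neq0).
- exact: UGamma_ell0.
- move=> g; rewrite (stab_ell0E two_neq0) => /imsetP [d]; rewrite inE => d_neq0 ->.
  by exists d; rewrite ?pclass_id.
Qed.
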